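(* There exists an absolute constant $C_1$ such that the following holds. Let $K\ge1$, let $d\ge2$ be an integer, and let $R_1,R_2$ be $K$-squares which are both contained in a square $R_3\subset[0,1]^2$ of side length $K^{-1/2^d}$ but are not both contained in any square of side length $K^{-1/2^{d-1}}$. Then the set $\mathrm{Reach}_{lin}(R_1,R_2,R_3)$ intersects at most $C_1K$ of the squares in $\{2R:R\in\mathcal{C}_K\}$.
   Context: A $K$-square is a square in $[0,1]^2$ of side length $1/K$; $\mathcal{C}_K$ is the collection of dyadic $K$-squares; for $R\in\mathcal{C}_K$, $2R$ is the square with the same center as $R$ and twice the side length. For squares $R_1,R_2,R_3\subset[0,1]^2$, $\mathrm{Reach}_{lin}(R_1,R_2,R_3)$ is the set of $(x,y)\in R_3$ such that either $(x,y),(x_1,y_1),(x_2,y_2)$ are collinear for some $(x_1,y_1)\in R_1$, $(x_2,y_2)\in R_2$, or $y=y_1$ for some $(x_1,y_1)\in R_1$. *)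

From Stdlib Require Import Reals Lra List.
Open Scope R_scope.

Definition sq (a b s : R) (p : R * R) : Prop :=
  a <= fst p <= a + s /\ b <= snd p <= b + s.

Definition in_unit (a b s : R) : Prop :=
  0 <= a /\ a + s <= 1 /\ 0 <= b /\ b + s <= 1.

Definition subset (A B : R * R -> Prop) : Prop := forall p, A p -> B p.

Definition collinear (p q r : R * R) : Prop :=
  (fst q - fst p) * (snd r - snd p) - (fst r - fst p) * (snd q - snd p) = 0.

Definition reach_lin (R1 R2 R3 : R * R -> Prop) (p : R * R) : Prop :=
  R3 p /\
  ((exists p1 p2, R1 p1 /\ R2 p2 /\ collinear p p1 p2) \/
   (exists p1, R1 p1 /\ snd p = snd p1)).

Definition grid_sq (K : R) (ij : nat * nat) : R * R -> Prop :=
  sq (INR (fst ij) / K) (INR (snd ij) / K) (/ K).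

Definition in_CK (K : R) (ij : nat * nat) : Prop :=
  in_unit (INR (fst ij) / K) (INR (snd ij) / K) (/ K).

(* 2R for R = grid_sq K ij: same center, twice the side length. *)
Definition double_grid_sq (K : R) (ij : nat * nat) : R * R -> Prop :=
  sq (INR (fst ij) / K - / (2 * K)) (INR (snd ij) / K - / (2 * K)) (2 / K).

From Stdlib Require Import Reals Lra List ZArith Lia ClassicalEpsilon.
Open Scope R_scope.

(* Write s = K^(-1/2^d), so that s^2 = K^(-1/2^(d-1)).  The reach set is the union of the
   horizontal strip through R1, which meets the doubles of O(K) grid squares (a band of a few
   rows), and of the lines through R1 and R2 inside R3.  As R1 and R2 do not fit in a common
   square of side s^2, they are at distance about s^2 in some coordinate, say x, and the
   direction of the chord is within 45 degrees of the x-axis.  Then every line through both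
   squares stays, over the width s of R3, within O(1/K + 1/(K s)) of a single line, so it
   meets O(s K) columns of grid squares, O(1 + 1/s) squares in each: O(K) in total since
   1/s <= K.  For K < 16 we simply count all (K+1)^2 grid squares. *)


Lemma Rabs_le_inv (x a : R) : Rabs x <= a -> - a <= x <= a.
Proof. unfold Rabs; destruct (Rcase_abs x); lra. Qed.

Lemma NoDup_length_le_grid (l : list (nat * nat)) (lo1 N1 N2 : nat) (lo2 : nat -> nat) :
  NoDup l ->
  (forall i j, In (i, j) l -> (lo1 <= i < lo1 + N1 /\ lo2 i <= j < lo2 i + N2)%nat) ->
  (length l <= N1 * N2)%nat.
Proof.
  intros ND H.
  set (g := fun p : nat * nat => (fst p, (snd p - lo2 (fst p))%nat)).
  assert (ND' : NoDup (map g l)).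
  { apply NoDup_map_NoDup_ForallPairs; auto.
    intros [i j] [i' j'] Hi Hi' E. unfold g in E; simpl in E. injection E as E1 E2.
    subst i'. apply H in Hi. apply H in Hi'. f_equal. lia. }
  assert (Hinc : incl (map g l) (list_prod (seq lo1 N1) (seq 0 N2))).
  { intros q Hq. apply in_map_iff in Hq. destruct Hq as [[i j] [<- Hin]].
    apply H in Hin. unfold g; simpl. apply in_prod; apply in_seq; lia. }
  pose proof (NoDup_incl_length ND' Hinc) as L.
  rewrite length_map, length_prod, !length_seq in L. exact L.
Qed.

Definition nat_floor (x : R) : nat := Z.to_nat (Int_part x).

Lemma nat_floor_spec (x : R) : 0 <= x -> INR (nat_floor x) <= x < INR (nat_floor x) + 1.
Proof.
  intro Hx. destruct (base_Int_part x) as [H1 H2].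
  assert (Hp : (-1 < Int_part x)%Z) by (apply lt_IZR; lra).
  unfold nat_floor. rewrite INR_IZR_INZ, Z2Nat.id by lia. lra.
Qed.

Lemma nat_floor_window (c A : R) (i : nat) : 0 <= A -> Rabs (INR i - c) <= A ->
  (nat_floor (Rmax (c - A) 0) <= i < nat_floor (Rmax (c - A) 0) + (nat_floor (2 * A) + 2))%nat.
Proof.
  intros HA Hi. apply Rabs_le_inv in Hi.
  assert (Hx : c - A <= Rmax (c - A) 0 /\ 0 <= Rmax (c - A) 0)
    by (split; [apply Rmax_l | apply Rmax_r]).
  assert (Hxi : Rmax (c - A) 0 <= INR i) by (apply Rmax_lub; [lra | apply pos_INR]).
  destruct (nat_floor_spec _ (proj2 Hx)) as [F1 F2].
  destruct (nat_floor_spec (2 * A) ltac:(lra)) as [F3 F4].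
  split.
  - apply INR_le. lra.
  - apply INR_lt. rewrite !plus_INR. simpl. lra.
Qed.

Lemma NoDup_length_le_window (l : list (nat * nat)) (c A B : R) (f : nat -> R) :
  NoDup l -> 0 <= A -> 0 <= B ->
  (forall i j, In (i, j) l -> Rabs (INR i - c) <= A /\ Rabs (INR j - f i) <= B) ->
  INR (length l) <= (2 * A + 2) * (2 * B + 2).
Proof.
  intros ND HA HB H.
  assert (Hle : (length l <= (nat_floor (2 * A) + 2) * (nat_floor (2 * B) + 2))%nat).
  { apply (NoDup_length_le_grid l (nat_floor (Rmax (c - A) 0)) _ _
             (fun i => nat_floor (Rmax (f i - B) 0))); auto.
    intros i j Hin. destruct (H i j Hin).
    split; apply nat_floor_window; auto. }
  apply le_INR in Hle. rewrite mult_INR, !plus_INR in Hle.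
  destruct (nat_floor_spec (2 * A)); destruct (nat_floor_spec (2 * B)); try lra.
  eapply Rle_trans; [exact Hle |].
  apply Rmult_le_compat; simpl; pose proof (pos_INR (nat_floor (2 * A)));
    pose proof (pos_INR (nat_floor (2 * B))); lra.
Qed.

Lemma NoDup_length_le_split {A : Type} (P Q : A -> Prop) (l : list A) (n m : R) :
  NoDup l -> (forall x, In x l -> P x \/ Q x) ->
  (forall l', NoDup l' -> (forall x, In x l' -> P x) -> INR (length l') <= n) ->
  (forall l', NoDup l' -> (forall x, In x l' -> Q x) -> INR (length l') <= m) ->
  INR (length l) <= n + m.
Proof.
  intros ND HPQ HP HQ.
  set (p := fun x => if excluded_middle_informative (P x) then true else false).
  rewrite <- (filter_length p l), plus_INR.
  apply Rplus_le_compat.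
  - apply HP; [apply NoDup_filter; auto |].
    intros x Hx. apply filter_In in Hx as [_ Hx]. unfold p in Hx.
    destruct (excluded_middle_informative (P x)); [auto | discriminate].
  - apply HQ; [apply NoDup_filter; auto |].
    intros x Hx. apply filter_In in Hx as [Hin Hx]. unfold p in Hx.
    destruct (excluded_middle_informative (P x)); [discriminate |].
    destruct (HPQ x Hin); tauto.
Qed.

Lemma slope_le_1 (a b : R) : a <> 0 -> Rabs b <= Rabs a -> Rabs (b / a) <= 1.
Proof.
  intros Ha Hb. unfold Rdiv. rewrite Rabs_mult, Rabs_inv.
  assert (0 < Rabs a) by (apply Rabs_pos_lt; auto).
  apply (Rmult_le_reg_r (Rabs a)); auto.
  rewrite Rmult_assoc, Rinv_l by lra. lra.
Qed.

Lemma chord_slope_error (a1 b1 a2 b2 u x1 y1 x2 y2 : R) :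
  a2 - a1 <> 0 -> Rabs (b2 - b1) <= Rabs (a2 - a1) ->
  sq a1 b1 u (x1, y1) -> sq a2 b2 u (x2, y2) ->
  Rabs (x2 - x1) * Rabs ((y2 - y1) / (x2 - x1) - (b2 - b1) / (a2 - a1)) <= 2 * u.
Proof.
  intros Ha Hb [Hx1 Hy1] [Hx2 Hy2]; simpl in *.
  destruct (Req_dec (x2 - x1) 0) as [E | Hx].
  { rewrite E, Rabs_R0. lra. }
  set (q := (y2 - y1) / (x2 - x1) - (b2 - b1) / (a2 - a1)).
  assert (Hq : (x2 - x1) * q * (a2 - a1) =
               ((y2 - b2) - (y1 - b1)) * (a2 - a1) - (b2 - b1) * ((x2 - a2) - (x1 - a1)))
    by (unfold q; field; auto).
  assert (Hdy : Rabs ((y2 - b2) - (y1 - b1)) <= u) by (apply Rabs_le; lra).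
  assert (Hdx : Rabs ((x2 - a2) - (x1 - a1)) <= u) by (apply Rabs_le; lra).
  assert (Hn : Rabs ((x2 - x1) * q) * Rabs (a2 - a1) <= 2 * u * Rabs (a2 - a1)).
  { rewrite <- Rabs_mult, Hq. unfold Rminus at 1.
    eapply Rle_trans; [apply Rabs_triang |].
    rewrite Rabs_Ropp, !Rabs_mult.
    pose proof (Rabs_pos (a2 - a1)). pose proof (Rabs_pos (b2 - b1)).
    assert (Rabs (y2 - b2 - (y1 - b1)) * Rabs (a2 - a1) <= u * Rabs (a2 - a1))
      by (apply Rmult_le_compat_r; lra).
    assert (Rabs (b2 - b1) * Rabs (x2 - a2 - (x1 - a1)) <= Rabs (a2 - a1) * u)
      by (apply Rmult_le_compat; auto using Rabs_pos).
    lra. }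
  rewrite <- Rabs_mult.
  apply (Rmult_le_reg_r (Rabs (a2 - a1))); [apply Rabs_pos_lt; auto | exact Hn].
Qed.

Definition corner_line (a1 b1 a2 b2 x : R) : R := b1 + (x - a1) * ((b2 - b1) / (a2 - a1)).

(* The chord from [p1] to [p2] has length at least [s^2 / 2], so by [chord_slope_error] its
   slope is within [4 u / s^2] of that of the corner line; over a horizontal distance [s]
   this costs [4 u / s]. *)
Lemma collinear_near_corner_line (a1 b1 a2 b2 u s x1 y1 x2 y2 px py : R) :
  0 < s -> 4 * u <= s * s -> s * s - u < Rabs (a2 - a1) ->
  Rabs (b2 - b1) <= Rabs (a2 - a1) ->
  sq a1 b1 u (x1, y1) -> sq a2 b2 u (x2, y2) -> Rabs (px - x1) <= s ->
  collinear (px, py) (x1, y1) (x2, y2) ->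
  Rabs (py - corner_line a1 b1 a2 b2 px) <= 2 * u + 4 * u / s.
Proof.
  intros Hs Hu Ha Hb Hp1 Hp2 Hpx Hcol.
  assert (Ha0 : a2 - a1 <> 0) by (intro E; rewrite E, Rabs_R0 in Ha; nra).
  pose proof (chord_slope_error _ _ _ _ _ _ _ _ _ Ha0 Hb Hp1 Hp2) as Hq.
  destruct Hp1 as [Hx1 Hy1]; destruct Hp2 as [Hx2 Hy2]; simpl in *.
  unfold collinear in Hcol; simpl in Hcol.
  assert (Hx : s * s / 2 <= Rabs (x2 - x1)).
  { pose proof (Rabs_triang_inv (a2 - a1) (x2 - x1)).
    assert (Rabs (a2 - a1 - (x2 - x1)) <= u) by (apply Rabs_le; lra). lra. }
  assert (Hx0 : x2 - x1 <> 0) by (intro E; rewrite E, Rabs_R0 in Hx; nra).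
  set (m0 := (b2 - b1) / (a2 - a1)) in *.
  set (q := (y2 - y1) / (x2 - x1) - m0) in *.
  assert (Hm0 : Rabs m0 <= 1) by (apply slope_le_1; auto).
  assert (Hsq : s * Rabs q <= 4 * u / s).
  { pose proof (Rabs_pos q).
    assert (s * s * Rabs q <= 4 * u) by nra.
    apply (Rmult_le_reg_r s); auto.
    replace (4 * u / s * s) with (4 * u) by (field; lra). nra. }
  assert (HE : py - (b1 + (px - a1) * m0) = (y1 - b1) - (x1 - a1) * m0 + (px - x1) * q).
  { assert (Hpy : py = y1 + (y2 - y1) * (px - x1) / (x2 - x1))
      by (field_simplify_eq; auto; nra).
    rewrite Hpy. unfold q. field. auto. }
  unfold corner_line. fold m0. rewrite HE.
  assert (Rabs (y1 - b1) <= u) by (apply Rabs_le; lra).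
  assert (Rabs ((x1 - a1) * m0) <= u)
    by (rewrite Rabs_mult, <- (Rmult_1_r u);
        apply Rmult_le_compat; auto using Rabs_pos; apply Rabs_le; lra).
  assert (Rabs ((px - x1) * q) <= s * Rabs q)
    by (rewrite Rabs_mult; apply Rmult_le_compat_r; auto using Rabs_pos).
  eapply Rle_trans; [apply Rabs_triang |].
  unfold Rminus at 1. eapply Rle_trans; [apply Rplus_le_compat_r, Rabs_triang |].
  rewrite Rabs_Ropp. lra.
Qed.

Lemma Rpower_le_1 (K y : R) : 1 <= K -> y <= 0 -> Rpower K y <= 1.
Proof. intros HK Hy. rewrite <- (Rpower_O K) by lra. apply Rle_Rpower; auto. Qed.

Lemma inv_le_Rpower (K y : R) : 1 <= K -> -1 <= y -> / K <= Rpower K y.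
Proof.
  intros HK Hy. rewrite <- (Rpower_1 K), <- Rpower_Ropp, Rpower_1 by lra.
  apply Rle_Rpower; auto.
Qed.

Lemma Rpower_inv_pow2_S (K : R) (n : nat) : 0 < K ->
  Rpower K (- / 2 ^ n) = Rpower K (- / 2 ^ S n) * Rpower K (- / 2 ^ S n).
Proof.
  intro HK. rewrite <- Rpower_plus. f_equal. simpl.
  assert (0 < 2 ^ n) by (apply pow_lt; lra). field. lra.
Qed.

(* [K ^ (-1/2^n) >= K ^ (-1/2) = 1 / sqrt K], and [1 / sqrt K >= 4 / K] as [sqrt K >= 4]. *)
Lemma four_div_le_Rpower (K : R) (n : nat) : 16 <= K -> (1 <= n)%nat ->
  4 / K <= Rpower K (- / 2 ^ n).
Proof.
  intros HK Hn.
  assert (Hsqrt : Rpower K (- / 2) = / sqrt K)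
    by (rewrite Rpower_Ropp, Rpower_sqrt by lra; reflexivity).
  assert (H4 : 4 <= sqrt K)
    by (rewrite <- (sqrt_square 4) by lra; apply sqrt_le_1_alt; lra).
  assert (HsK : sqrt K * sqrt K = K) by (apply sqrt_sqrt; lra).
  apply Rle_trans with (Rpower K (- / 2)).
  - rewrite Hsqrt. set (r := sqrt K) in *.
    assert (Hr : 0 < / r) by (apply Rinv_0_lt_compat; lra).
    assert (H4r : 4 * / r <= 1)
      by (rewrite <- (Rinv_r r) by lra; apply Rmult_le_compat_r; lra).
    replace (4 / K) with (4 * / r * / r) by (rewrite <- HsK; field; lra).
    nra.
  - apply Rle_Rpower; [lra |]. apply Ropp_le_contravar, Rinv_le_contravar; [lra |].
    replace 2 with (2 ^ 1) at 1 by ring. apply Rle_pow; [lra | exact Hn].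
Qed.

Lemma sq_subset_corners (a1 b1 u a b S : R) : 0 <= u ->
  subset (sq a1 b1 u) (sq a b S) ->
  a <= a1 /\ a1 + u <= a + S /\ b <= b1 /\ b1 + u <= b + S.
Proof.
  intros Hu Hsub.
  pose proof (Hsub (a1, b1) ltac:(unfold sq; simpl; lra)) as [H1 H2].
  pose proof (Hsub (a1 + u, b1 + u) ltac:(unfold sq; simpl; lra)) as [H3 H4].
  simpl in *. lra.
Qed.

Lemma interval_cover (x1 x2 u S : R) :
  0 <= x1 -> x1 + u <= 1 -> 0 <= x2 -> x2 + u <= 1 -> S <= 1 -> Rabs (x2 - x1) <= S - u ->
  exists a, 0 <= a /\ a + S <= 1 /\ a <= x1 /\ x1 + u <= a + S /\ a <= x2 /\ x2 + u <= a + S.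
Proof.
  intros H1 H2 H3 H4 HS Hx. apply Rabs_le_inv in Hx.
  exists (Rmin (Rmin x1 x2) (1 - S)).
  unfold Rmin; destruct (Rle_dec x1 x2); destruct (Rle_dec _ (1 - S)); lra.
Qed.

Lemma not_in_common_square_far (a1 b1 a2 b2 u S : R) : S <= 1 ->
  in_unit a1 b1 u -> in_unit a2 b2 u ->
  ~ (exists a b, in_unit a b S /\ subset (sq a1 b1 u) (sq a b S) /\
                 subset (sq a2 b2 u) (sq a b S)) ->
  S - u < Rabs (a2 - a1) \/ S - u < Rabs (b2 - b1).
Proof.
  intros HS [A1 [A2 [A3 A4]]] [B1 [B2 [B3 B4]]] Hn.
  destruct (Rlt_le_dec (S - u) (Rabs (a2 - a1))) as [Ha | Ha]; [now left |].
  destruct (Rlt_le_dec (S - u) (Rabs (b2 - b1))) as [Hb | Hb]; [now right |].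
  exfalso. apply Hn.
  destruct (interval_cover a1 a2 u S) as [a Ha']; auto.
  destruct (interval_cover b1 b2 u S) as [b Hb']; auto.
  exists a, b. unfold in_unit, subset, sq. repeat split; intros; lra.
Qed.

Lemma double_grid_sq_index (K : R) (i j : nat) (p : R * R) : 0 < K ->
  double_grid_sq K (i, j) p ->
  Rabs (INR i + 1 / 2 - fst p * K) <= 1 /\ Rabs (INR j + 1 / 2 - snd p * K) <= 1.
Proof.
  intros HK [Hx Hy]; simpl in *.
  assert (Hscale : forall (n : nat) x,
            INR n / K - / (2 * K) <= x <= INR n / K - / (2 * K) + 2 / K ->
            Rabs (INR n + 1 / 2 - x * K) <= 1).
  { intros n x Hnx. apply Rabs_le.
    assert ((INR n / K - / (2 * K)) * K <= x * K) by (apply Rmult_le_compat_r; lra).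
    assert (x * K <= (INR n / K - / (2 * K) + 2 / K) * K) by (apply Rmult_le_compat_r; lra).
    replace ((INR n / K - / (2 * K)) * K) with (INR n - 1 / 2) in * by (field; lra).
    replace ((INR n / K - / (2 * K) + 2 / K) * K) with (INR n + 3 / 2) in * by (field; lra).
    lra. }
  split; apply Hscale; auto.
Qed.

Lemma in_CK_window (K : R) (i j : nat) : 0 < K -> in_CK K (i, j) ->
  Rabs (INR i - (K - 1) / 2) <= (K - 1) / 2 /\ Rabs (INR j - (K - 1) / 2) <= (K - 1) / 2.
Proof.
  intros HK [_ [Hi [_ Hj]]]; simpl in *.
  assert (Hscale : forall n : nat,
            INR n / K + / K <= 1 -> Rabs (INR n - (K - 1) / 2) <= (K - 1) / 2).
  { intros n Hn. pose proof (pos_INR n). apply Rabs_le.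
    assert ((INR n / K + / K) * K <= 1 * K) by (apply Rmult_le_compat_r; lra).
    replace ((INR n / K + / K) * K) with (INR n + 1) in * by (field; lra).
    lra. }
  split; apply Hscale; auto.
Qed.

Definition meets_strip (K b : R) (ij : nat * nat) : Prop :=
  exists p, double_grid_sq K ij p /\ b <= snd p <= b + / K.

Lemma strip_count (K b : R) (l : list (nat * nat)) : 1 <= K -> NoDup l ->
  (forall ij, In ij l -> in_CK K ij /\ meets_strip K b ij) ->
  INR (length l) <= 10 * K.
Proof.
  intros HK ND Hl.
  eapply Rle_trans.
  - apply (NoDup_length_le_window l ((K - 1) / 2) ((K - 1) / 2) (3 / 2) (fun _ => b * K));
      auto; try lra.
    intros i j Hij. destruct (Hl _ Hij) as [Hck [p [Hd Hp]]].
    split; [apply (in_CK_window K i j); auto; lra |].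
    destruct (double_grid_sq_index K i j p ltac:(lra) Hd) as [_ Hj].
    apply Rabs_le_inv in Hj. apply Rabs_le.
    assert (b * K <= snd p * K <= b * K + 1).
    { split; [apply Rmult_le_compat_r; lra |].
      replace (b * K + 1) with ((b + / K) * K) by (field; lra).
      apply Rmult_le_compat_r; lra. }
    lra.
  - lra.
Qed.

Lemma grid_count (K : R) (l : list (nat * nat)) : 1 <= K -> NoDup l ->
  (forall ij, In ij l -> in_CK K ij) -> INR (length l) <= (K + 1) * (K + 1).
Proof.
  intros HK ND Hl.
  replace ((K + 1) * (K + 1)) with ((2 * ((K - 1) / 2) + 2) * (2 * ((K - 1) / 2) + 2))
    by field.
  apply NoDup_length_le_window with (c := (K - 1) / 2) (f := fun _ => (K - 1) / 2);
    auto; try lra.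
  intros i j Hij. apply in_CK_window; auto; lra.
Qed.

Definition meets_cone (K s a1 b1 a2 b2 a3 b3 : R) (ij : nat * nat) : Prop :=
  exists p p1 p2, double_grid_sq K ij p /\ sq a3 b3 s p /\
    sq a1 b1 (/ K) p1 /\ sq a2 b2 (/ K) p2 /\ collinear p p1 p2.

Lemma meets_cone_swap (K s a1 b1 a2 b2 a3 b3 : R) (i j : nat) :
  meets_cone K s a1 b1 a2 b2 a3 b3 (i, j) -> meets_cone K s b1 a1 b2 a2 b3 a3 (j, i).
Proof.
  intros [[px py] [[x1 y1] [[x2 y2] [Hd [H3 [H1 [H2 Hc]]]]]]].
  exists (py, px), (y1, x1), (y2, x2).
  unfold double_grid_sq, sq, collinear in *; simpl in *.
  repeat split; lra.
Qed.

Section FlatCone.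

Variables (K s a1 b1 a2 b2 a3 b3 : R).
Hypotheses (HK : 1 <= K) (Hs : 0 < s) (Hs1 : s <= 1) (HsK : / K <= s) (H4 : 4 / K <= s * s).
Hypotheses (Ha3 : a3 <= a1) (Ha1 : a1 + / K <= a3 + s).
Hypotheses (Hfar : s * s - / K < Rabs (a2 - a1)) (Hflat : Rabs (b2 - b1) <= Rabs (a2 - a1)).

Let line := corner_line a1 b1 a2 b2.

Lemma meets_cone_window (i j : nat) : meets_cone K s a1 b1 a2 b2 a3 b3 (i, j) ->
  Rabs (INR i - (a3 * K + s * K / 2 - 1 / 2)) <= s * K / 2 + 1 /\
  Rabs (INR j - (line ((INR i + 1 / 2) / K) * K - 1 / 2)) <= 4 + 4 / s.
Proof.
  intros [[px py] [[x1 y1] [[x2 y2] [Hd [[Hpx Hpy] [Hp1 [Hp2 Hc]]]]]]].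
  pose proof Hp1 as [Hx1 _]. simpl in *.
  assert (HK0 : 0 < K) by lra.
  destruct (double_grid_sq_index K i j (px, py) HK0 Hd) as [Hi Hj]; simpl in *.
  apply Rabs_le_inv in Hi. apply Rabs_le_inv in Hj.
  split.
  { apply Rabs_le.
    assert (a3 * K <= px * K <= (a3 + s) * K) by (split; apply Rmult_le_compat_r; lra).
    lra. }
  assert (Hline : Rabs (py - line px) <= 2 * / K + 4 * / K / s).
  { apply (collinear_near_corner_line a1 b1 a2 b2 (/ K) s x1 y1 x2 y2); auto; try lra.
    apply Rabs_le. lra. }
  set (xi := (INR i + 1 / 2) / K).
  assert (Hshift : Rabs (line px - line xi) <= / K).
  { assert (Ha : a2 - a1 <> 0) by (intro E; rewrite E, Rabs_R0 in Hfar; nra).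
    replace (line px - line xi) with ((px - xi) * ((b2 - b1) / (a2 - a1)))
      by (unfold line, corner_line; ring).
    rewrite Rabs_mult, <- (Rmult_1_r (/ K)).
    apply Rmult_le_compat; auto using Rabs_pos, slope_le_1.
    apply Rabs_le. unfold xi.
    replace (px - (INR i + 1 / 2) / K) with ((px * K - (INR i + 1 / 2)) * / K) by (field; lra).
    assert (0 < / K) by (apply Rinv_0_lt_compat; lra).
    split; nra. }
  pose proof (Rabs_triang (py - line px) (line px - line xi)) as Htri.
  replace (py - line px + (line px - line xi)) with (py - line xi) in Htri by ring.
  assert (Hscaled : Rabs (py * K - line xi * K) <= 3 + 4 / s).
  { replace (py * K - line xi * K) with ((py - line xi) * K) by ring.
    rewrite Rabs_mult, (Rabs_right K) by lra.
    replace (3 + 4 / s) with ((3 * / K + 4 * / K / s) * K) by (field; lra).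
    apply Rmult_le_compat_r; lra. }
  apply Rabs_le_inv in Hscaled. apply Rabs_le. lra.
Qed.

Lemma flat_cone_count (l : list (nat * nat)) : NoDup l ->
  (forall ij, In ij l -> meets_cone K s a1 b1 a2 b2 a3 b3 ij) ->
  INR (length l) <= 90 * K.
Proof.
  intros ND Hl.
  assert (Hinv : / s <= K).
  { rewrite <- (Rinv_inv K). apply Rinv_le_contravar; auto.
    apply Rinv_0_lt_compat; lra. }
  assert (0 < / s) by (apply Rinv_0_lt_compat; lra).
  eapply Rle_trans.
  - apply (NoDup_length_le_window l (a3 * K + s * K / 2 - 1 / 2) (s * K / 2 + 1) (4 + 4 / s)
             (fun i => line ((INR i + 1 / 2) / K) * K - 1 / 2) ND); [nra | unfold Rdiv; nra |].
    intros i j Hij. exact (meets_cone_window i j (Hl _ Hij)).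
  - replace ((2 * (s * K / 2 + 1) + 2) * (2 * (4 + 4 / s) + 2))
      with (10 * (s * K) + 8 * K + 40 + 32 * / s) by (field; lra).
    nra.
Qed.

End FlatCone.

Lemma cone_count (K s a1 b1 a2 b2 a3 b3 : R) (l : list (nat * nat)) :
  1 <= K -> 0 < s -> s <= 1 -> / K <= s -> 4 / K <= s * s ->
  a3 <= a1 -> a1 + / K <= a3 + s -> b3 <= b1 -> b1 + / K <= b3 + s ->
  s * s - / K < Rabs (a2 - a1) \/ s * s - / K < Rabs (b2 - b1) ->
  NoDup l -> (forall ij, In ij l -> meets_cone K s a1 b1 a2 b2 a3 b3 ij) ->
  INR (length l) <= 90 * K.
Proof.
  intros HK Hs Hs1 HsK H4 Ha3 Ha1 Hb3 Hb1 Hfar ND Hl.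
  destruct (Rle_dec (Rabs (b2 - b1)) (Rabs (a2 - a1))) as [Hflat | Hsteep].
  - apply (flat_cone_count K s a1 b1 a2 b2 a3 b3); auto. destruct Hfar; lra.
  - set (swap := fun ij : nat * nat => (snd ij, fst ij)).
    rewrite <- (length_map swap l).
    apply (flat_cone_count K s b1 a1 b2 a2 b3 a3); auto; try (destruct Hfar; lra).
    + apply NoDup_map_NoDup_ForallPairs; auto.
      intros [i j] [i' j'] _ _ E. unfold swap in E; simpl in E. congruence.
    + intros ij Hij. apply in_map_iff in Hij as [[i j] [<- Hij]].
      apply meets_cone_swap, Hl, Hij.
Qed.

Theorem lemma6p2 :
  exists C1 : R,
  forall (K : R) (d : nat) (a1 b1 a2 b2 a3 b3 : R),
    1 <= K -> (2 <= d)%nat ->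
    (* R1, R2 are K-squares (in [0,1]^2, side 1/K) *)
    in_unit a1 b1 (/ K) -> in_unit a2 b2 (/ K) ->
    (* R3 ⊂ [0,1]^2 has side K^(-1/2^d) *)
    in_unit a3 b3 (Rpower K (- / 2 ^ d)) ->
    subset (sq a1 b1 (/ K)) (sq a3 b3 (Rpower K (- / 2 ^ d))) ->
    subset (sq a2 b2 (/ K)) (sq a3 b3 (Rpower K (- / 2 ^ d))) ->
    (* not both contained in any square of side K^(-1/2^(d-1)) *)
    ~ (exists a b : R,
         in_unit a b (Rpower K (- / 2 ^ (d - 1))) /\
         subset (sq a1 b1 (/ K)) (sq a b (Rpower K (- / 2 ^ (d - 1)))) /\
         subset (sq a2 b2 (/ K)) (sq a b (Rpower K (- / 2 ^ (d - 1))))) ->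
    (* any family of distinct R ∈ C_K with 2R meeting Reach_lin has size ≤ C1 K *)
    forall l : list (nat * nat),
      NoDup l ->
      (forall ij, In ij l ->
         in_CK K ij /\
         exists p, double_grid_sq K ij p /\
           reach_lin (sq a1 b1 (/ K)) (sq a2 b2 (/ K))
                     (sq a3 b3 (Rpower K (- / 2 ^ d))) p) ->
      INR (length l) <= C1 * K.
Proof.
  exists 100.
  intros K d a1 b1 a2 b2 a3 b3 HK Hd H1 H2 _ S1 _ Hsep l ND Hl.
  destruct (Rlt_le_dec K 16) as [Hsmall | Hlarge].
  { eapply Rle_trans; [apply (grid_count K l); auto; intros ij Hij; apply Hl, Hij |]. nra. }
  destruct d as [| d']; [lia |].
  replace (S d' - 1)%nat with d' in Hsep by lia.
  rewrite (Rpower_inv_pow2_S K d') in Hsep by lra.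
  set (s := Rpower K (- / 2 ^ S d')) in *.
  assert (Hs : 0 < s) by apply exp_pos.
  assert (Hs1 : s <= 1).
  { apply Rpower_le_1; auto.
    assert (0 < / 2 ^ S d') by (apply Rinv_0_lt_compat, pow_lt; lra). lra. }
  assert (HsK : / K <= s).
  { apply inv_le_Rpower; auto.
    assert (1 <= 2 ^ S d') by (apply pow_R1_Rle; lra).
    assert (/ 2 ^ S d' <= 1) by (rewrite <- Rinv_1; apply Rinv_le_contravar; lra).
    lra. }
  assert (H4 : 4 / K <= s * s)
    by (unfold s; rewrite <- Rpower_inv_pow2_S by lra; apply four_div_le_Rpower; [lra | lia]).
  assert (Hu : 0 <= / K) by (left; apply Rinv_0_lt_compat; lra).
  destruct (sq_subset_corners a1 b1 (/ K) a3 b3 s Hu S1) as [Ha3 [Ha1 [Hb3 Hb1]]].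
  eapply Rle_trans.
  - apply (NoDup_length_le_split (fun ij => in_CK K ij /\ meets_strip K b1 ij)
             (meets_cone K s a1 b1 a2 b2 a3 b3) l (10 * K) (90 * K) ND).
    + intros ij Hij.
      destruct (Hl ij Hij) as [Hck [p [Hdp [Hp3 [[p1 [p2 [Hp1 [Hp2 Hc]]]] | [p1 [Hp1 Hy]]]]]]].
      * right. exists p, p1, p2. auto.
      * left. split; auto. exists p. split; auto. destruct Hp1. lra.
    + intros l' ND' Hl'. apply (strip_count K b1); auto.
    + intros l' ND' Hl'. apply (cone_count K s a1 b1 a2 b2 a3 b3); auto.
      apply not_in_common_square_far; auto. nra.
  - lra.
Qed.
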